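(* Let $\lambda=2\cos(\pi/5)$, let $p$ be a rational prime and $n$ a positive integer. Then the images in $SL(2,\mathbb Z[\lambda]/p^{n+1}\mathbb Z[\lambda])$ of the matrices $$\begin{pmatrix}1&p^n\lambda^i\\0&1\end{pmatrix},\quad \begin{pmatrix}1&0\\-p^n\lambda^i&1\end{pmatrix},\quad \begin{pmatrix}1-p^n\lambda^{i+1}&p^n\lambda^{i+2}\\-p^n\lambda^i&1+p^n\lambda^{i+1}\end{pmatrix},\qquad i=0,1,$$ generate a group of order $p^6$.
   Context: $\lambda=2\cos(\pi/5)$ satisfies $\lambda^2=\lambda+1$; entries are reduced modulo the ideal $p^{n+1}\mathbb Z[\lambda]$. *)

From mathcomp Require Import all_boot all_order all_algebra.
Set Implicit Arguments. Unset Strict Implicit. Unset Printing Implicit Defensive.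
Import GRing.Theory.
Local Open Scope ring_scope.

(* The quotient ring Z[lambda]/M Z[lambda], with
   lambda^2 = lambda + 1, is represented as pairs (a, b) : 'Z_M * 'Z_M,
   standing for a + b*lambda (Z[lambda] is free over Z with basis 1, lambda).
   We only use it with M >= 2, where 'Z_M is genuinely Z/MZ. *)
Definition Zl (M : nat) : finType := ('Z_M * 'Z_M)%type.

Section ZlOps.
Variable M : nat.
Definition zl0 : Zl M := (0, 0).
Definition zl1 : Zl M := (1, 0).
Definition lam : Zl M := (0, 1).
Definition zladd (x y : Zl M) : Zl M := (x.1 + y.1, x.2 + y.2).
Definition zlopp (x : Zl M) : Zl M := (- x.1, - x.2).
(* (a + b l)(c + d l) = ac + bd + (ad + bc + bd) l   since l^2 = l + 1 *)
Definition zlmul (x y : Zl M) : Zl M :=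
  (x.1 * y.1 + x.2 * y.2, x.1 * y.2 + x.2 * y.1 + x.2 * y.2).
Definition zlnat (k : nat) : Zl M := (k%:R, 0).
Definition lam_pow (i : nat) : Zl M := iter i (zlmul lam) zl1.

Definition Mat : finType := (Zl M * Zl M * Zl M * Zl M)%type.
Definition mk (a b c d : Zl M) : Mat := (a, b, c, d).
Definition m11 (A : Mat) := A.1.1.1.
Definition m12 (A : Mat) := A.1.1.2.
Definition m21 (A : Mat) := A.1.2.
Definition m22 (A : Mat) := A.2.
Definition mmul (A B : Mat) : Mat :=
  mk (zladd (zlmul (m11 A) (m11 B)) (zlmul (m12 A) (m21 B)))
     (zladd (zlmul (m11 A) (m12 B)) (zlmul (m12 A) (m22 B)))
     (zladd (zlmul (m21 A) (m11 B)) (zlmul (m22 A) (m21 B)))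
     (zladd (zlmul (m21 A) (m12 B)) (zlmul (m22 A) (m22 B))).
Definition mid : Mat := mk zl1 zl0 zl0 zl1.
Definition mdet (A : Mat) : Zl M :=
  zladd (zlmul (m11 A) (m22 A)) (zlopp (zlmul (m12 A) (m21 A))).
(* inverse in SL(2): the adjugate *)
Definition minv (A : Mat) : Mat :=
  mk (m22 A) (zlopp (m12 A)) (zlopp (m21 A)) (m11 A).

Definition gen_group (S : {set Mat}) : {set Mat} :=
  \bigcap_(A : {set Mat} | [&& S \subset A, mid \in A,
         [forall x in A, forall y in A, mmul x y \in A] &
         [forall x in A, minv x \in A]]) A.
End ZlOps.

Definition modulus (p n : nat) : nat := (p ^ n.+1)%N.

Definition gens (p n : nat) : {set Mat (modulus p n)} :=
  let M := modulus p n in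
  let pn : Zl M := zlnat M (p ^ n) in
  let t (i : nat) : Zl M := zlmul pn (lam_pow M i) in
  [set A | [exists i : 'I_2,
     [|| A == mk (zl1 M) (t i) (zl0 M) (zl1 M),
         A == mk (zl1 M) (zl0 M) (zlopp (t i)) (zl1 M) |
         A == mk (zladd (zl1 M) (zlopp (t i.+1))) (t i.+2)
                 (zlopp (t i)) (zladd (zl1 M) (t i.+1))]]].

From mathcomp Require Import all_boot all_order all_algebra.
From mathcomp Require Import ring.
Set Implicit Arguments. Unset Strict Implicit. Unset Printing Implicit Defensive.
Import GRing.Theory.
Local Open Scope ring_scope.

(* Since q = p^n satisfies q^2 = 0 modulo p^(n+1), the matrices 1 + q X with X
   traceless over Z[lambda] multiply by adding their X's, and X only matters
   modulo p.  They form a group isomorphic to the additive group of traceless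
   2x2 matrices over Z[lambda]/p, which is F_p^6.  The six generators are
   1 + q X for six matrices X spanning that lattice over Z, so every element
   is a product of powers of generators, and the generated group has order
   p^6. *)

Section GeneratedGroup.
Variable M : nat.

Lemma gen_group_min (S B : {set Mat M}) :
  S \subset B -> mid M \in B -> {in B &, forall x y, mmul x y \in B} ->
  {in B, forall x, minv x \in B} -> gen_group S \subset B.
Proof.
move=> sSB B1 BM BV; apply: bigcap_inf; apply/and4P; split=> //.
- by apply/forall_inP=> x Bx; apply/forall_inP=> y By; apply: BM.
- by apply/forall_inP=> x Bx; apply: BV.
Qed.

Lemma mem_gen_group (S : {set Mat M}) x :
  (forall B : {set Mat M}, S \subset B -> mid M \in B ->
     {in B &, forall y z, mmul y z \in B} -> x \in B) ->
  x \in gen_group S.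
Proof.
move=> SB; apply/bigcapP=> B /and4P [sSB B1 /forall_inP BM _]; apply: SB => //.
by move=> y z By Bz; apply: (forall_inP (BM y By)).
Qed.

End GeneratedGroup.

(* [cong_mx q a0 a1 b0 b1 c0 c1] is 1 + q [[a, b], [c, -a]] with
   a = a0 + a1 lambda, b = b0 + b1 lambda, c = c0 + c1 lambda. *)
Definition cong_mx M (q a0 a1 b0 b1 c0 c1 : 'Z_M) : Mat M :=
  mk ((1 + q * a0, q * a1) : Zl M) (q * b0, q * b1) (q * c0, q * c1)
     (1 - q * a0, - (q * a1)).

Ltac unfold_mat := rewrite /cong_mx /mmul /mid /minv /mk /m11 /m12 /m21 /m22
  /zladd /zlmul /zlopp /zl1 /zl0 /zlnat /lam_pow /lam /=.

Ltac mat_eq := unfold_mat; congr (_, _, _, _); congr pair; ring.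

Section CongruenceMatrices.
Variables (M : nat) (q : 'Z_M).

Lemma minv_cong_mx a0 a1 b0 b1 c0 c1 :
  minv (cong_mx q a0 a1 b0 b1 c0 c1) =
  cong_mx q (- a0) (- a1) (- b0) (- b1) (- c0) (- c1).
Proof. by mat_eq. Qed.

Lemma cong_mx0 : cong_mx q 0 0 0 0 0 0 = mid M.
Proof. by mat_eq. Qed.

Hypothesis qq0 : q * q = 0.

Lemma mmul_cong_mx a0 a1 b0 b1 c0 c1 a0' a1' b0' b1' c0' c1' :
  mmul (cong_mx q a0 a1 b0 b1 c0 c1) (cong_mx q a0' a1' b0' b1' c0' c1') =
  cong_mx q (a0 + a0') (a1 + a1') (b0 + b0') (b1 + b1') (c0 + c0') (c1 + c1').
Proof. by unfold_mat; congr (_, _, _, _); congr pair; ring: qq0. Qed.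

Lemma cong_mx_scale_in (B : {set Mat M}) u0 u1 u2 u3 u4 u5 (k : 'Z_M) :
  mid M \in B -> {in B &, forall x y, mmul x y \in B} ->
  cong_mx q u0 u1 u2 u3 u4 u5 \in B ->
  cong_mx q (k * u0) (k * u1) (k * u2) (k * u3) (k * u4) (k * u5) \in B.
Proof.
move=> B1 BM Bu; rewrite -(natr_Zp k); elim: (k : nat) => [|m IH].
  by rewrite !mul0r cong_mx0.
have -> : cong_mx q (m.+1%:R * u0) (m.+1%:R * u1) (m.+1%:R * u2)
    (m.+1%:R * u3) (m.+1%:R * u4) (m.+1%:R * u5) =
  mmul (cong_mx q (m%:R * u0) (m%:R * u1) (m%:R * u2) (m%:R * u3)
    (m%:R * u4) (m%:R * u5)) (cong_mx q u0 u1 u2 u3 u4 u5).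
  by rewrite mmul_cong_mx; congr cong_mx; rewrite mulrS; ring.
exact: BM.
Qed.

End CongruenceMatrices.

Lemma Zp_nat_eq0 M k : (1 < M)%N -> (M %| k)%N -> (k%:R : 'Z_M) = 0.
Proof. by move=> M1 /eqP Mk; apply: val_inj; rewrite /= val_Zp_nat. Qed.

Section Level.
Variables (p n : nat).
Hypotheses (p_pr : prime p) (n_gt0 : (0 < n)%N).

Let M := modulus p n.
Definition level : 'Z_M := (p ^ n)%:R.

Lemma modulus_gt1 : (1 < M)%N.
Proof.
rewrite /M /modulus (leq_trans (prime_gt1 p_pr)) //.
by rewrite -{1}(expn1 p) (leq_pexp2l (prime_gt0 p_pr)).
Qed.

Lemma level_sqr : level * level = 0.
Proof.
rewrite /level -natrM Zp_nat_eq0 ?modulus_gt1 //.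
by rewrite /M /modulus -expnD dvdn_exp2l // -addn1 leq_add2l.
Qed.

Lemma level_modp (r : 'Z_M) : level * r = level * (r %% p)%N%:R.
Proof.
have level_p : level * p%:R = 0.
  by rewrite /level -natrM Zp_nat_eq0 ?modulus_gt1 // /M /modulus expnSr.
rewrite -{1}(natr_Zp r) {1}(divn_eq r p) natrD natrM mulrDr mulrA.
by rewrite [level * _]mulrC -mulrA level_p mulr0 add0r.
Qed.

Lemma level_inj (x y : nat) : (x < p)%N -> (y < p)%N ->
  level * x%:R = level * y%:R -> x = y.
Proof.
have pn_gt0 : (0 < p ^ n)%N by rewrite expn_gt0 prime_gt0.
have small z : (z < p)%N -> (p ^ n * z < M)%N.
  by move=> zp; rewrite /M /modulus expnSr ltn_pmul2l.
move=> xp yp; rewrite /level -!natrM => /(congr1 (@nat_of_ord _)).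
rewrite !val_Zp_nat ?modulus_gt1 // !modn_small ?small //.
by move/eqP; rewrite eqn_pmul2l // => /eqP.
Qed.

Definition coords : finType := ('I_p * 'I_p * 'I_p * 'I_p * 'I_p * 'I_p)%type.

Definition cong_of (x : coords) : Mat M :=
  let '(a0, a1, b0, b1, c0, c1) := x in
  cong_mx level (a0 : nat)%:R (a1 : nat)%:R (b0 : nat)%:R (b1 : nat)%:R
     (c0 : nat)%:R (c1 : nat)%:R.

Definition cong_group : {set Mat M} := [set cong_of x | x : coords].

Lemma cong_group_elim A : A \in cong_group ->
  exists a0 a1 b0 b1 c0 c1, A = cong_mx level a0 a1 b0 b1 c0 c1.
Proof.
by move/imsetP=> [[[[[[x0 x1] x2] x3] x4] x5] _ ->]; do 6 eexists.
Qed.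

Lemma cong_mx_in_group a0 a1 b0 b1 c0 c1 :
  cong_mx level a0 a1 b0 b1 c0 c1 \in cong_group.
Proof.
have p_gt0 := prime_gt0 p_pr.
apply/imsetP.
exists (Ordinal (ltn_pmod a0 p_gt0), Ordinal (ltn_pmod a1 p_gt0),
        Ordinal (ltn_pmod b0 p_gt0), Ordinal (ltn_pmod b1 p_gt0),
        Ordinal (ltn_pmod c0 p_gt0), Ordinal (ltn_pmod c1 p_gt0)) => //=.
by rewrite /cong_mx !(level_modp a0, level_modp a1, level_modp b0,
  level_modp b1, level_modp c0, level_modp c1).
Qed.

Lemma cong_of_inj : injective cong_of.
Proof.
move=> [[[[[x0 x1] x2] x3] x4] x5] [[[[[y0 y1] y2] y3] y4] y5] /= E.
have coord_eq : forall x y : 'I_p,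
    level * (x : nat)%:R = level * (y : nat)%:R -> x = y.
  by move=> x y e; apply: val_inj; apply: level_inj (ltn_ord x) (ltn_ord y) e.
move: (congr1 (fun A => (m11 A).1) E) (congr1 (fun A => (m11 A).2) E).
move: (congr1 (fun A => (m12 A).1) E) (congr1 (fun A => (m12 A).2) E).
move: (congr1 (fun A => (m21 A).1) E) (congr1 (fun A => (m21 A).2) E).
by rewrite /= => /coord_eq-> /coord_eq-> /coord_eq-> /coord_eq->
  /addrI/coord_eq-> /coord_eq->.
Qed.

Lemma card_cong_group : #|cong_group| = (p ^ 6)%N.
Proof.
rewrite card_imset; last exact: cong_of_inj.
by rewrite !card_prod !card_ord !expnS expn0 muln1 !mulnA.
Qed.

Ltac gens_case i := split; rewrite inE; apply/existsP; exists i; apply/or3P;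
  [apply: Or31 | apply: Or32 | apply: Or33]; apply/eqP; mat_eq.

Lemma gens0_cong_mx :
  [/\ cong_mx level 0 0 1 0 0 0 \in gens p n,
      cong_mx level 0 0 0 0 (-1) 0 \in gens p n &
      cong_mx level 0 (-1) 1 1 (-1) 0 \in gens p n].
Proof. by gens_case (ord0 : 'I_2). Qed.

Lemma gens1_cong_mx :
  [/\ cong_mx level 0 0 0 1 0 0 \in gens p n,
      cong_mx level 0 0 0 0 0 (-1) \in gens p n &
      cong_mx level (-1) (-1) 1 2 0 (-1) \in gens p n].
Proof. by gens_case (@Ordinal 2 1 isT). Qed.

Lemma gens_sub_cong_group : gens p n \subset cong_group.
Proof.
have in_cg A a0 a1 b0 b1 c0 c1 :
    A = cong_mx level a0 a1 b0 b1 c0 c1 -> A \in cong_group.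
  by move->; apply: cong_mx_in_group.
apply/subsetP=> A; rewrite inE => /existsP [[[|[|i]] Hi]] //= /or3P.
- by case=> /eqP->; [apply: (in_cg _ 0 0 1 0 0 0)
  | apply: (in_cg _ 0 0 0 0 (-1) 0) | apply: (in_cg _ 0 (-1) 1 1 (-1) 0)];
  mat_eq.
- by case=> /eqP->; [apply: (in_cg _ 0 0 0 1 0 0)
  | apply: (in_cg _ 0 0 0 0 0 (-1)) | apply: (in_cg _ (-1) (-1) 1 2 0 (-1))];
  mat_eq.
Qed.

Lemma gen_group_sub_cong_group : gen_group (gens p n) \subset cong_group.
Proof.
apply: gen_group_min.
- exact: gens_sub_cong_group.
- by rewrite -(cong_mx0 level) cong_mx_in_group.
- move=> x y /cong_group_elim [a0 [a1 [b0 [b1 [c0 [c1 ->]]]]]].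
  move=> /cong_group_elim [a0' [a1' [b0' [b1' [c0' [c1' ->]]]]]].
  by rewrite (mmul_cong_mx level_sqr) cong_mx_in_group.
- move=> x /cong_group_elim [a0 [a1 [b0 [b1 [c0 [c1 ->]]]]]].
  by rewrite minv_cong_mx cong_mx_in_group.
Qed.

(* The six generator directions form a Z-basis of the triples (a, b, c); the
   x_i are the coordinates of (a, b, c) in that basis. *)
Lemma cong_group_sub_gen_group : cong_group \subset gen_group (gens p n).
Proof.
apply/subsetP=> A /cong_group_elim [a0 [a1 [b0 [b1 [c0 [c1 ->]]]]]].
apply: mem_gen_group => B sSB B1 BM.
have pow u0 u1 u2 u3 u4 u5 (k : 'Z_M) :
    cong_mx level u0 u1 u2 u3 u4 u5 \in gens p n ->
    cong_mx level (k * u0) (k * u1) (k * u2) (k * u3) (k * u4) (k * u5) \in B.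
  by move=> g; apply: (cong_mx_scale_in level_sqr _ B1 BM);
  apply: (subsetP sSB).
case: gens0_cong_mx => g1 g3 g5; case: gens1_cong_mx => g2 g4 g6.
set x6 := - a0; set x5 := a0 - a1.
set x1 := b0 - x5 - x6; set x2 := b1 - x5 - x6 * 2.
set x3 := - c0 - x5; set x4 := - c1 - x6.
have -> : cong_mx level a0 a1 b0 b1 c0 c1 =
  mmul (mmul (mmul (mmul (mmul
    (cong_mx level (x1 * 0) (x1 * 0) (x1 * 1) (x1 * 0) (x1 * 0) (x1 * 0))
    (cong_mx level (x2 * 0) (x2 * 0) (x2 * 0) (x2 * 1) (x2 * 0) (x2 * 0)))
    (cong_mx level (x3 * 0) (x3 * 0) (x3 * 0) (x3 * 0) (x3 * -1) (x3 * 0)))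
    (cong_mx level (x4 * 0) (x4 * 0) (x4 * 0) (x4 * 0) (x4 * 0) (x4 * -1)))
    (cong_mx level (x5 * 0) (x5 * -1) (x5 * 1) (x5 * 1) (x5 * -1) (x5 * 0)))
    (cong_mx level (x6 * -1) (x6 * -1) (x6 * 1) (x6 * 2) (x6 * 0) (x6 * -1)).
  rewrite !(mmul_cong_mx level_sqr); congr cong_mx;
  by rewrite /x1 /x2 /x3 /x4 /x5 /x6; ring.
by do 5 (apply: (BM); last exact: pow); exact: pow.
Qed.

End Level.

Theorem lemmaA (p n : nat) :
  prime p -> (0 < n)%N -> #|gen_group (gens p n)| = (p ^ 6)%N.
Proof.
move=> p_pr n_gt0; rewrite -(card_cong_group n p_pr).
suff -> : gen_group (gens p n) = cong_group p n by [].
by apply/eqP; rewrite eqEsubset gen_group_sub_cong_group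
  ?cong_group_sub_gen_group.
Qed.
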